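(* Let $M$ be an object of an abelian category $\mathcal A$. Then: (1) $M$ is (strongly) self-Rickart if and only if for every split fully invariant short exact sequence $0\to F\to M\to C\to 0$, $M$ is (strongly) self-$F$-split. (2) $M$ is dual (strongly) self-Rickart if and only if for every split fully invariant short exact sequence $0\to F\to M\to C\to 0$, $M$ is dual (strongly) self-$F$-split.
   Context: Convention: each statement containing parenthetical words holds in two versions: one obtained by deleting all parenthetical words and one obtained by keeping all of them. Let $\mathcal A$ be an abelian category. A morphism $s:X\to Y$ is a section if $ts=1_X$ for some $t$, and a retraction if $st=1_Y$ for some $t$. A monomorphism $i:K\to M$ is fully invariant if for every morphism $h:M\to M$ there is $\alpha:K\to K$ with $hi=i\alpha$; an epimorphism $d:M\to C$ is fully coinvariant if for every $h:M\to M$ there is $\beta:C\to C$ with $dh=\beta d$. A short exact sequence $0\to F\xrightarrow{i}M\xrightarrow{d}C\to 0$ is fully invariant if $i$ is fully invariant. $M$ is (strongly) self-$F$-split if for every morphism $g:M\to M$, $\ker(dg)$ is a (fully invariant) section; $M$ is dual (strongly) self-$F$-split if for every morphism $g:M\to M$, $\mathrm{coker}(gi)$ is a (fully coinvariant) retraction. $M$ is (strongly) self-Rickart if for every morphism $f:M\to M$, $\ker(f)$ is a (fully invariant) section, and dual (strongly) self-Rickart if for every $f:M\to M$, $\mathrm{coker}(f)$ is a (fully coinvariant) retraction. *)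

From HB Require Import structures.
From mathcomp Require Import all_boot all_algebra.
Set Implicit Arguments. Unset Strict Implicit. Unset Printing Implicit Defensive.
Import GRing.Theory.
Local Open Scope ring_scope.

Record PreAdd := {
  Ob : Type;
  Mor : Ob -> Ob -> zmodType;
  idm : forall A, Mor A A;
  comp : forall A B C, Mor B C -> Mor A B -> Mor A C;
  comp_id_l : forall A B (f : Mor A B), comp (idm B) f = f;
  comp_id_r : forall A B (f : Mor A B), comp f (idm A) = f;
  comp_assoc : forall A B C D (h : Mor C D) (g : Mor B C) (f : Mor A B),
      comp h (comp g f) = comp (comp h g) f;
  comp_addl : forall A B C (g g' : Mor B C) (f : Mor A B),
      comp (g + g') f = comp g f + comp g' f;
  comp_addr : forall A B C (g : Mor B C) (f f' : Mor A B),
      comp g (f + f') = comp g f + comp g f'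
}.
Arguments idm {p} A.
Arguments comp {p A B C}.

Notation "g \oc f" := (comp g f) (at level 40, left associativity).

Section Notions.
Variable C : PreAdd.

Definition mono {A B : Ob C} (f : Mor A B) : Prop :=
  forall X (g h : Mor X A), f \oc g = f \oc h -> g = h.
Definition epi {A B : Ob C} (f : Mor A B) : Prop :=
  forall X (g h : Mor B X), g \oc f = h \oc f -> g = h.

Definition is_kernel {K A B : Ob C} (k : Mor K A) (f : Mor A B) : Prop :=
  f \oc k = 0 /\
  forall X (x : Mor X A), f \oc x = 0 -> exists! y : Mor X K, k \oc y = x.

Definition is_cokernel {A B Q : Ob C} (q : Mor B Q) (f : Mor A B) : Prop :=
  q \oc f = 0 /\
  forall X (x : Mor B X), x \oc f = 0 -> exists! y : Mor Q X, y \oc q = x.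

Definition is_zero_object (Z : Ob C) : Prop :=
  forall X, (forall f g : Mor Z X, f = g) /\ (forall f g : Mor X Z, f = g).

Definition is_biproduct (A B P : Ob C) (p1 : Mor P A) (p2 : Mor P B)
  (i1 : Mor A P) (i2 : Mor B P) : Prop :=
  [/\ p1 \oc i1 = idm A, p2 \oc i2 = idm B, p1 \oc i2 = 0, p2 \oc i1 = 0
    & i1 \oc p1 + i2 \oc p2 = idm P].

Definition abelian : Prop :=
  (exists Z, is_zero_object Z) /\
  (forall A B, exists P (p1 : Mor P A) (p2 : Mor P B) i1 i2,
      is_biproduct p1 p2 i1 i2) /\
  (forall A B (f : Mor A B), exists K (k : Mor K A), is_kernel k f) /\
  (forall A B (f : Mor A B), exists Q (q : Mor B Q), is_cokernel q f) /\
  (forall A B (f : Mor A B), mono f -> exists Q (q : Mor B Q), is_kernel f q) /\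
  (forall A B (f : Mor A B), epi f -> exists K (k : Mor K A), is_cokernel f k).

Definition section {X Y : Ob C} (s : Mor X Y) : Prop :=
  exists t : Mor Y X, t \oc s = idm X.
Definition retraction {X Y : Ob C} (s : Mor X Y) : Prop :=
  exists t : Mor Y X, s \oc t = idm Y.

Definition fully_invariant {K M : Ob C} (i : Mor K M) : Prop :=
  mono i /\ forall h : Mor M M, exists a : Mor K K, h \oc i = i \oc a.
Definition fully_coinvariant {M Q : Ob C} (d : Mor M Q) : Prop :=
  epi d /\ forall h : Mor M M, exists b : Mor Q Q, d \oc h = b \oc d.

Definition short_exact {F M Q : Ob C} (i : Mor F M) (d : Mor M Q) : Prop :=
  mono i /\ epi d /\ is_kernel i d /\ is_cokernel d i.
Definition split_ses {F M Q : Ob C} (i : Mor F M) (d : Mor M Q) : Prop :=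
  short_exact i d /\ section i.
Definition fully_invariant_ses {F M Q : Ob C} (i : Mor F M) (d : Mor M Q) : Prop :=
  short_exact i d /\ fully_invariant i.

(* "ker f is a (fully invariant) section": every kernel of f is one
   (kernels exist and are unique up to iso in an abelian category). *)
Definition ker_section {A B : Ob C} (f : Mor A B) : Prop :=
  forall K (k : Mor K A), is_kernel k f -> section k.
Definition ker_fi_section {A B : Ob C} (f : Mor A B) : Prop :=
  forall K (k : Mor K A), is_kernel k f -> section k /\ fully_invariant k.
Definition coker_retraction {A B : Ob C} (f : Mor A B) : Prop :=
  forall Q (q : Mor B Q), is_cokernel q f -> retraction q.
Definition coker_fc_retraction {A B : Ob C} (f : Mor A B) : Prop :=
  forall Q (q : Mor B Q), is_cokernel q f -> retraction q /\ fully_coinvariant q.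

Definition self_Rickart (M : Ob C) : Prop :=
  forall f : Mor M M, ker_section f.
Definition strongly_self_Rickart (M : Ob C) : Prop :=
  forall f : Mor M M, ker_fi_section f.
Definition dual_self_Rickart (M : Ob C) : Prop :=
  forall f : Mor M M, coker_retraction f.
Definition dual_strongly_self_Rickart (M : Ob C) : Prop :=
  forall f : Mor M M, coker_fc_retraction f.

Definition self_F_split {F M Q : Ob C} (i : Mor F M) (d : Mor M Q) : Prop :=
  forall g : Mor M M, ker_section (d \oc g).
Definition strongly_self_F_split {F M Q : Ob C} (i : Mor F M) (d : Mor M Q) : Prop :=
  forall g : Mor M M, ker_fi_section (d \oc g).
Definition dual_self_F_split {F M Q : Ob C} (i : Mor F M) (d : Mor M Q) : Prop :=
  forall g : Mor M M, coker_retraction (g \oc i).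
Definition dual_strongly_self_F_split {F M Q : Ob C} (i : Mor F M) (d : Mor M Q) : Prop :=
  forall g : Mor M M, coker_fc_retraction (g \oc i).

End Notions.

(* A split sequence 0 -> F -i-> M -d-> Q -> 0 with retraction t of i lets one
   replace d by the idempotent 1 - i t and the map g i : F -> M by g i t : M -> M
   without changing kernels resp. cokernels, so the Rickart conditions on the
   endomorphisms (1 - i t) g and g i t give the F-split conditions.  Conversely
   the trivial split fully invariant sequences 0 -> 0 -> M -1-> M -> 0 and
   0 -> M -1-> M -> 0 -> 0 turn the F-split conditions back into the Rickart
   conditions. *)
From mathcomp Require Import all_boot all_algebra.
Set Implicit Arguments. Unset Strict Implicit. Unset Printing Implicit Defensive.
Import GRing.Theory.
Local Open Scope ring_scope.

Section PreAdditive.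
Variable C : PreAdd.
Implicit Types A B F M Q X : Ob C.

Lemma comp0l A B D (f : Mor A B) : (0 : Mor B D) \oc f = 0.
Proof.
apply: (@addrI _ (0 \oc f)).
by rewrite -comp_addl !addr0.
Qed.

Lemma comp0r A B D (g : Mor B D) : g \oc (0 : Mor A B) = 0.
Proof.
apply: (@addrI _ (g \oc 0)).
by rewrite -comp_addr !addr0.
Qed.

Lemma compNl A B D (g : Mor B D) (f : Mor A B) : (- g) \oc f = - (g \oc f).
Proof. by apply/eqP; rewrite -addr_eq0 -comp_addl addNr comp0l. Qed.

Definition ker_equiv A B B' (f : Mor A B) (f' : Mor A B') : Prop :=
  forall X (x : Mor X A), f \oc x = 0 <-> f' \oc x = 0.

Definition coker_equiv A A' B (f : Mor A B) (f' : Mor A' B) : Prop :=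
  forall X (x : Mor B X), x \oc f = 0 <-> x \oc f' = 0.

Lemma ker_equiv_compr A A' B B' (f : Mor A B) (f' : Mor A B') (g : Mor A' A) :
  ker_equiv f f' -> ker_equiv (f \oc g) (f' \oc g).
Proof. by move=> E X x; rewrite -!comp_assoc. Qed.

Lemma is_kernel_equiv K A B B' (k : Mor K A) (f : Mor A B) (f' : Mor A B') :
  ker_equiv f f' -> is_kernel k f -> is_kernel k f'.
Proof. by move=> E [/E fk0 univ]; split=> // X x /E; apply: univ. Qed.

Lemma is_cokernel_equiv Q A A' B (q : Mor B Q) (f : Mor A B) (f' : Mor A' B) :
  coker_equiv f f' -> is_cokernel q f -> is_cokernel q f'.
Proof. by move=> E [/E qf0 univ]; split=> // X x /E; apply: univ. Qed.

Lemma ker_section_equiv A B B' (f : Mor A B) (f' : Mor A B') :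
  ker_equiv f f' -> ker_section f' -> ker_section f.
Proof. by move=> E sf' K k /(is_kernel_equiv E); apply: sf'. Qed.

Lemma ker_fi_section_equiv A B B' (f : Mor A B) (f' : Mor A B') :
  ker_equiv f f' -> ker_fi_section f' -> ker_fi_section f.
Proof. by move=> E sf' K k /(is_kernel_equiv E); apply: sf'. Qed.

Lemma coker_retraction_equiv A A' B (f : Mor A B) (f' : Mor A' B) :
  coker_equiv f f' -> coker_retraction f' -> coker_retraction f.
Proof. by move=> E rf' Q q /(is_cokernel_equiv E); apply: rf'. Qed.

Lemma coker_fc_retraction_equiv A A' B (f : Mor A B) (f' : Mor A' B) :
  coker_equiv f f' -> coker_fc_retraction f' -> coker_fc_retraction f.
Proof. by move=> E rf' Q q /(is_cokernel_equiv E); apply: rf'. Qed.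

Lemma split_ker_equiv F M Q (i : Mor F M) (d : Mor M Q) (t : Mor M F) :
  is_kernel i d -> t \oc i = idm F -> ker_equiv d (idm M - i \oc t).
Proof.
move=> [di0 univ] ti X x; rewrite comp_addl compNl comp_id_l.
split=> [/univ [y [<- _]] | /eqP].
  by rewrite -comp_assoc (comp_assoc t) ti comp_id_l subrr.
rewrite subr_eq0 => /eqP ->.
by rewrite -comp_assoc !comp_assoc di0 !comp0l.
Qed.

Lemma retraction_coker_equiv A A' B (f : Mor A B) (t : Mor A' A) :
  retraction t -> coker_equiv f (f \oc t).
Proof.
move=> [s ts] X x; split=> [xf0 | xft0]; first by rewrite comp_assoc xf0 comp0l.
by rewrite -[f]comp_id_r -ts !comp_assoc -(comp_assoc x) xft0 comp0l.
Qed.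

Lemma mono_idm A : mono (idm A).
Proof. by move=> X g h; rewrite !comp_id_l. Qed.

Lemma epi_idm A : epi (idm A).
Proof. by move=> X g h; rewrite !comp_id_r. Qed.

Lemma is_kernel_idm A B : is_kernel (idm A) (0 : Mor A B).
Proof.
split=> [|X x _]; first exact: comp0l.
by exists x; split=> [|y]; rewrite comp_id_l.
Qed.

Lemma is_cokernel_idm A B : is_cokernel (idm B) (0 : Mor A B).
Proof.
split=> [|X x _]; first exact: comp0r.
by exists x; split=> [|y]; rewrite comp_id_r.
Qed.

Section ZeroObject.
Variable Z : Ob C.
Hypothesis Z0 : is_zero_object Z.

Lemma mono_from_zero A (f : Mor Z A) : mono f.
Proof. by move=> X g h _; apply: (Z0 X).2. Qed.

Lemma epi_to_zero A (f : Mor A Z) : epi f.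
Proof. by move=> X g h _; apply: (Z0 X).1. Qed.

Lemma mono_is_kernel_zero A B (f : Mor A B) : mono f -> is_kernel (0 : Mor Z A) f.
Proof.
move=> mf; split=> [|X x fx0]; first exact: comp0r.
exists 0; split=> [|y _]; last exact: (Z0 X).2.
by rewrite comp0l; apply: mf; rewrite fx0 comp0r.
Qed.

Lemma epi_is_cokernel_zero A B (f : Mor A B) : epi f -> is_cokernel (0 : Mor B Z) f.
Proof.
move=> ef; split=> [|X x xf0]; first exact: comp0l.
exists 0; split=> [|y _]; last exact: (Z0 X).1.
by rewrite comp0r; apply: ef; rewrite xf0 comp0l.
Qed.

Lemma split_fi_ses_zero_idm M :
  split_ses (0 : Mor Z M) (idm M) /\ fully_invariant_ses (0 : Mor Z M) (idm M).
Proof.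
have ses : short_exact (0 : Mor Z M) (idm M).
  split; first exact: mono_from_zero.
  split; first exact: epi_idm.
  split; [exact: mono_is_kernel_zero (@mono_idm M) | exact: is_cokernel_idm].
split; split=> //; first by exists 0; apply: (Z0 Z).1.
by split=> [|h]; [exact: mono_from_zero | exists (idm Z); apply: (Z0 M).1].
Qed.

Lemma split_fi_ses_idm_zero M :
  split_ses (idm M) (0 : Mor M Z) /\ fully_invariant_ses (idm M) (0 : Mor M Z).
Proof.
have ses : short_exact (idm M) (0 : Mor M Z).
  split; first exact: mono_idm.
  split; first exact: epi_to_zero.
  split; [exact: is_kernel_idm | exact: epi_is_cokernel_zero (@epi_idm M)].
split; split=> //; first by exists (idm M); rewrite comp_id_l.
by split=> [|h]; [exact: mono_idm | exists h; rewrite comp_id_l comp_id_r].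
Qed.

End ZeroObject.

Lemma self_Rickart_F_split F M Q (i : Mor F M) (d : Mor M Q) :
  self_Rickart M -> split_ses i d -> self_F_split i d.
Proof.
move=> HM [[_ [_ [ki _]]] [t ti]] g.
exact: ker_section_equiv (ker_equiv_compr g (split_ker_equiv ki ti)) (HM _).
Qed.

Lemma strongly_self_Rickart_F_split F M Q (i : Mor F M) (d : Mor M Q) :
  strongly_self_Rickart M -> split_ses i d -> strongly_self_F_split i d.
Proof.
move=> HM [[_ [_ [ki _]]] [t ti]] g.
exact: ker_fi_section_equiv (ker_equiv_compr g (split_ker_equiv ki ti)) (HM _).
Qed.

Lemma dual_self_Rickart_F_split F M Q (i : Mor F M) (d : Mor M Q) :
  dual_self_Rickart M -> split_ses i d -> dual_self_F_split i d.
Proof.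
move=> HM [_ [t ti]] g; apply: coker_retraction_equiv (HM (g \oc i \oc t)).
by apply: retraction_coker_equiv; exists i.
Qed.

Lemma dual_strongly_self_Rickart_F_split F M Q (i : Mor F M) (d : Mor M Q) :
  dual_strongly_self_Rickart M -> split_ses i d -> dual_strongly_self_F_split i d.
Proof.
move=> HM [_ [t ti]] g; apply: coker_fc_retraction_equiv (HM (g \oc i \oc t)).
by apply: retraction_coker_equiv; exists i.
Qed.

Lemma self_F_split_idm F M (i : Mor F M) : self_F_split i (idm M) -> self_Rickart M.
Proof. by move=> H f; rewrite -[f]comp_id_l; apply: H. Qed.

Lemma strongly_self_F_split_idm F M (i : Mor F M) :
  strongly_self_F_split i (idm M) -> strongly_self_Rickart M.
Proof. by move=> H f; rewrite -[f]comp_id_l; apply: H. Qed.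

Lemma dual_self_F_split_idm M Q (d : Mor M Q) :
  dual_self_F_split (idm M) d -> dual_self_Rickart M.
Proof. by move=> H f; rewrite -[f]comp_id_r; apply: H. Qed.

Lemma dual_strongly_self_F_split_idm M Q (d : Mor M Q) :
  dual_strongly_self_F_split (idm M) d -> dual_strongly_self_Rickart M.
Proof. by move=> H f; rewrite -[f]comp_id_r; apply: H. Qed.

End PreAdditive.

Theorem corollary4p4 (C : PreAdd) (HC : abelian C) (M : Ob C) :
  (self_Rickart M <->
     (forall (F Q : Ob C) (i : Mor F M) (d : Mor M Q),
        split_ses i d -> fully_invariant_ses i d -> self_F_split i d)) /\
  (strongly_self_Rickart M <->
     (forall (F Q : Ob C) (i : Mor F M) (d : Mor M Q),
        split_ses i d -> fully_invariant_ses i d -> strongly_self_F_split i d)) /\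
  (dual_self_Rickart M <->
     (forall (F Q : Ob C) (i : Mor F M) (d : Mor M Q),
        split_ses i d -> fully_invariant_ses i d -> dual_self_F_split i d)) /\
  (dual_strongly_self_Rickart M <->
     (forall (F Q : Ob C) (i : Mor F M) (d : Mor M Q),
        split_ses i d -> fully_invariant_ses i d -> dual_strongly_self_F_split i d)).
Proof.
have [Z Z0] := HC.1.
have [s0 fi0] := split_fi_ses_zero_idm Z0 M.
have [s1 fi1] := split_fi_ses_idm_zero Z0 M.
split; [|split; [|split]]; split.
- by move=> HM F Q i d sid _; apply: self_Rickart_F_split.
- by move=> H; apply: self_F_split_idm (H _ _ _ _ s0 fi0).
- by move=> HM F Q i d sid _; apply: strongly_self_Rickart_F_split.
- by move=> H; apply: strongly_self_F_split_idm (H _ _ _ _ s0 fi0).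
- by move=> HM F Q i d sid _; apply: dual_self_Rickart_F_split.
- by move=> H; apply: dual_self_F_split_idm (H _ _ _ _ s1 fi1).
- by move=> HM F Q i d sid _; apply: dual_strongly_self_Rickart_F_split.
- by move=> H; apply: dual_strongly_self_F_split_idm (H _ _ _ _ s1 fi1).
Qed.
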